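(* Let $G$ be a recursively presented group. Then for every finite generating set $S$ of $G$, the skeleton subshift $X_{G,S}$ is effective.
   Context: $G$ is recursively presented if $G\cong\mathbb{F}_S/\langle\langle R\rangle\rangle$ for some finite set $S$ and recursively enumerable set $R$ of words. For a finite generating set $S$, the skeleton subshift $X_{G,S}\subseteq(S\cup S^{-1})^{\mathbb{Z}}$ is the set of bi-infinite sequences none of whose non-empty finite factors represents $1_G$. A subshift over a finite alphabet is a set of bi-infinite sequences avoiding all words of a set $\mathcal F$ of forbidden finite words; it is effective if $\mathcal F$ can be chosen to be a decidable language. *)

From Stdlib Require Import Arith List ZArith Relations.
Import ListNotations.

Record group := Group {
  carrier :> Type;
  gmul : carrier -> carrier -> carrier;
  gone : carrier;
  ginv : carrier -> carrier;
  gassoc : forall x y z, gmul x (gmul y z) = gmul (gmul x y) z;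
  gmul1l : forall x, gmul gone x = x;
  gmul1r : forall x, gmul x gone = x;
  gmulVl : forall x, gmul (ginv x) x = gone;
  gmulVr : forall x, gmul x (ginv x) = gone
}.

Definition prodG (G : group) (l : list G) : G := fold_right (@gmul G) (@gone G) l.

Inductive rcode : Type :=
| RZero : rcode
| RSucc : rcode
| RProj : nat -> rcode
| RComp : rcode -> list rcode -> rcode
| RPrec : rcode -> rcode -> rcode
| RMu   : rcode -> rcode.

Inductive reval : rcode -> list nat -> nat -> Prop :=
| ev_zero v : reval RZero v 0
| ev_succ x v : reval RSucc (x :: v) (S x)
| ev_proj i v : i < length v -> reval (RProj i) v (nth i v 0)
| ev_comp f gs v ys y : revals gs v ys -> reval f ys y -> reval (RComp f gs) v y
| ev_prec0 f g v y : reval f v y -> reval (RPrec f g) (0 :: v) y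
| ev_precS f g n v r y :
    reval (RPrec f g) (n :: v) r -> reval g (n :: r :: v) y ->
    reval (RPrec f g) (S n :: v) y
| ev_mu f v n :
    reval f (n :: v) 0 ->
    (forall m, m < n -> exists k, reval f (m :: v) (S k)) ->
    reval (RMu f) v n
with revals : list rcode -> list nat -> list nat -> Prop :=
| evs_nil v : revals [] v []
| evs_cons g gs v y ys : reval g v y -> revals gs v ys -> revals (g :: gs) v (y :: ys).

Definition decidable_set (P : nat -> Prop) : Prop :=
  exists c : rcode, forall m, (P m -> reval c [m] 1) /\ (~ P m -> reval c [m] 0).

Definition re_set (P : nat -> Prop) : Prop :=
  exists c : rcode, forall m, P m <-> exists y, reval c [m] y.

Definition cpair (x y : nat) : nat := (x + y) * (x + y + 1) / 2 + y.
Fixpoint code_list (l : list nat) : nat :=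
  match l with
  | [] => 0
  | x :: l' => S (cpair x (code_list l'))
  end.

(** A letter of F_T with T = {t_0, ..., t_(n-1)}: (i, false) = t_i, (i, true) = t_i^-1. *)
Definition letter := (nat * bool)%type.
Definition letter_code (a : letter) : nat := 2 * fst a + (if snd a then 1 else 0).
Definition word_code (w : list letter) : nat := code_list (map letter_code w).

Definition word_over (n : nat) (w : list letter) : Prop := Forall (fun a => fst a < n) w.

Inductive pstep (n : nat) (R : list letter -> Prop) : list letter -> list letter -> Prop :=
| ps_free u v i b : i < n -> pstep n R (u ++ v) (u ++ (i, b) :: (i, negb b) :: v)
| ps_rel u v r : R r -> pstep n R (u ++ v) (u ++ r ++ v).

Definition trivial_in_pres (n : nat) (R : list letter -> Prop) (w : list letter) : Prop :=
  clos_refl_sym_trans (list letter) (pstep n R) w [].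

Definition eval_word (G : group) (gen : nat -> G) (w : list letter) : G :=
  prodG G (map (fun a : letter => if snd a then ginv G (gen (fst a)) else gen (fst a)) w).

(** G is isomorphic to F_T / <<R>> with T finite and R r.e.: there is a
    surjective homomorphism F_T -> G (determined by gen) with kernel <<R>>. *)
Definition recursively_presented (G : group) : Prop :=
  exists (n : nat) (gen : nat -> G) (R : list letter -> Prop),
    (forall r, R r -> word_over n r) /\
    re_set (fun m => exists w, word_code w = m /\ R w) /\
    (forall g : G, exists w, word_over n w /\ eval_word G gen w = g) /\
    (forall w, word_over n w ->
       (eval_word G gen w = gone G <-> trivial_in_pres n R w)).

Definition alph (G : group) (S : list G) (g : G) : Prop :=
  exists h, In h S /\ (g = h \/ g = ginv G h).

Definition generates (G : group) (S : list G) : Prop :=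
  forall g : G, exists l : list G, Forall (alph G S) l /\ prodG G l = g.

Definition factor {A : Type} (x : Z -> A) (i : Z) (n : nat) : list A :=
  map (fun j => x (i + Z.of_nat j)%Z) (seq 0 n).

Definition skeleton (G : group) (S : list G) (x : Z -> G) : Prop :=
  (forall i, alph G S (x i)) /\
  (forall i n, 0 < n -> prodG G (factor x i n) <> gone G).

(** X is an effective subshift over the finite alphabet A: after numbering the
    alphabet as a_0, ..., a_(k-1), X is the set of A-configurations avoiding a
    decidable set F of finite words. *)
Definition effective_subshift {T : Type} (A : T -> Prop) (X : (Z -> T) -> Prop) : Prop :=
  exists (k : nat) (a : nat -> T),
    (forall i j, i < k -> j < k -> a i = a j -> i = j) /\
    (forall t, A t <-> exists i, i < k /\ a i = t) /\
    exists F : list nat -> Prop,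
      (forall w, F w -> Forall (fun i => i < k) w) /\
      decidable_set (fun m => exists w, code_list w = m /\ F w) /\
      (forall x, X x <->
         ((forall i, A (x i)) /\
          (forall i w, F w -> factor x i (length w) <> map a w))).

From Stdlib Require Import Arith List ZArith Relations Lia Bool Classical.
Import ListNotations.

(* Number the letters of S u S^-1 as a_0, ..., a_(k-1).  As G is recursively
   presented, its word problem is semi-decidable: a word is trivial iff some
   certificate t -- a derivation from the empty word by insertions and deletions
   of cancelling pairs and relators, together with running times for the
   enumeration of those relators -- passes a primitive recursive check.  (The
   enumeration of the relators becomes such a check by running its mu-recursive
   code with a clock; primitive recursive checks are written in a small
   expression language that compiles to mu-recursive codes.)  Now forbid every
   word having a nonempty trivial prefix with a certificate t at most the length
   of the word.  This set of words is decidable, and it defines the skeleton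
   subshift: a trivial factor of a configuration with certificate t extends to a
   factor of length at least t, which is forbidden. *)

(** * Expressions for primitive recursive functions *)

Definition computable (a : nat) (f : list nat -> nat) : Prop :=
  exists c, forall v, length v = a -> reval c v (f v).

Lemma computable_ext a f g :
  computable a f -> (forall v, length v = a -> f v = g v) -> computable a g.
Proof. intros [c Hc] E. exists c. intros v Hv. rewrite <- E by auto. auto. Qed.

Lemma computable_nth a i : computable a (fun v => nth i v 0).
Proof.
  destruct (lt_dec i a).
  - exists (RProj i). intros v Hv. constructor. lia.
  - exists RZero. intros v Hv. rewrite nth_overflow by lia. constructor.
Qed.

Lemma computable_zero a : computable a (fun _ => 0).
Proof. exists RZero. intros. constructor. Qed.

Lemma computable_comp a (g : list nat -> nat) (fs : list (list nat -> nat)) :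
  Forall (computable a) fs -> computable (length fs) g ->
  computable a (fun v => g (map (fun f => f v) fs)).
Proof.
  intros Hfs [cg Hg].
  assert (Hcs : exists cs, forall v, length v = a -> revals cs v (map (fun f => f v) fs)).
  { clear Hg. induction Hfs as [|f fs [c Hc] _ [cs Hcs]].
    - exists []. constructor.
    - exists (c :: cs). constructor; auto. }
  destruct Hcs as [cs Hcs].
  exists (RComp cg cs). intros v Hv. econstructor; [apply Hcs; auto|].
  apply Hg. rewrite length_map. auto.
Qed.

Lemma computable_succ a f : computable a f -> computable a (fun v => S (f v)).
Proof.
  intros Hf.
  assert (Hsucc : computable 1 (fun v => S (nth 0 v 0))).
  { exists RSucc. intros [|x [|]] Hv; simpl in Hv; try lia. constructor. }
  exact (computable_comp a _ [f] (Forall_cons _ Hf (Forall_nil _)) Hsucc).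
Qed.

Lemma computable_prec a f g :
  computable a f -> computable (S (S a)) g ->
  computable (S a) (fun v => nat_rect (fun _ => nat) (f (tl v))
                               (fun i r => g (i :: r :: tl v)) (hd 0 v)).
Proof.
  intros [cf Hf] [cg Hg]. exists (RPrec cf cg). intros [|n w] Hv; simpl in Hv; try lia.
  simpl. induction n; simpl.
  - constructor. apply Hf. lia.
  - econstructor; [apply IHn|]. apply Hg. simpl. lia.
Qed.

Lemma map_nth_seq (v : list nat) :
  map (fun j => nth j v 0) (seq 0 (length v)) = v.
Proof.
  induction v using rev_ind; simpl; auto.
  rewrite length_app, Nat.add_1_r, seq_S, map_app. simpl.
  rewrite app_nth2, Nat.sub_diag by lia. simpl. f_equal.
  rewrite <- IHv at 2. apply map_ext_in. intros j Hj. apply in_seq in Hj.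
  rewrite app_nth1 by lia. auto.
Qed.

Lemma computable_nat_rect a (N b : list nat -> nat) (s : list nat -> nat) :
  computable a N -> computable a b -> computable (S (S a)) s ->
  computable a (fun v => nat_rect (fun _ => nat) (b v) (fun i r => s (i :: r :: v)) (N v)).
Proof.
  intros HN Hb Hs.
  set (projs := map (fun j (w : list nat) => nth j w 0) (seq 0 a)).
  assert (Hprojs : Forall (computable a) projs).
  { apply Forall_forall. intros f Hf. apply in_map_iff in Hf as [j [<- _]].
    apply computable_nth. }
  assert (Hlen : length (N :: projs) = S a)
    by (simpl; subst projs; rewrite length_map, length_seq; reflexivity).
  pose proof (computable_comp a _ (N :: projs) (Forall_cons _ HN Hprojs)
                ltac:(rewrite Hlen; exact (computable_prec a b s Hb Hs))) as H.
  eapply computable_ext; [exact H|]. intros v Hv. subst a projs. simpl.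
  rewrite map_map, map_nth_seq. reflexivity.
Qed.

(* [Rec N b s] iterates [s] [N] times starting from [b]; inside [s], [Var 0] is
   the counter, [Var 1] the accumulator and [Var (2 + i)] is [Var i] of the
   enclosing environment.  Variables out of range read as 0. *)
Inductive expr : Type :=
| Var (i : nat)
| Zero
| Suc (e : expr)
| Rec (N b s : expr)
| Call (f : expr) (args : list expr).

Fixpoint sem (e : expr) (env : list nat) {struct e} : nat :=
  match e with
  | Var i => nth i env 0
  | Zero => 0
  | Suc e => S (sem e env)
  | Rec N b s => nat_rect (fun _ => nat) (sem b env) (fun i r => sem s (i :: r :: env)) (sem N env)
  | Call f args => sem f (map (fun a => sem a env) args)
  end.

Fixpoint expr_ind' (P : expr -> Prop)
  (HV : forall i, P (Var i)) (HZ : P Zero) (HS : forall e, P e -> P (Suc e))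
  (HR : forall N b s, P N -> P b -> P s -> P (Rec N b s))
  (HC : forall f args, P f -> Forall P args -> P (Call f args)) (e : expr) : P e :=
  let IH := expr_ind' P HV HZ HS HR HC in
  match e with
  | Var i => HV i
  | Zero => HZ
  | Suc e => HS e (IH e)
  | Rec N b s => HR N b s (IH N) (IH b) (IH s)
  | Call f args => HC f args (IH f)
      ((fix go (l : list expr) : Forall P l :=
         match l with
         | [] => Forall_nil _
         | x :: l' => Forall_cons _ (IH x) (go l')
         end) args)
  end.

Lemma computable_sem e a : computable a (sem e).
Proof.
  revert a. induction e using expr_ind'; intros a; simpl.
  - apply computable_nth.
  - apply computable_zero.
  - apply computable_succ. auto.
  - apply computable_nat_rect; auto.
  - assert (Hargs : Forall (computable a) (map sem args)).
    { apply Forall_map. eapply Forall_impl; [|exact H]. auto. }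
    eapply computable_ext; [exact (computable_comp a (sem e) _ Hargs (IHe _))|].
    intros v _. cbv beta. rewrite map_map. reflexivity.
Qed.

Lemma nat_rect_ext (b1 b2 : nat) (s1 s2 : nat -> nat -> nat) n :
  b1 = b2 -> (forall i r, s1 i r = s2 i r) ->
  nat_rect (fun _ => nat) b1 s1 n = nat_rect (fun _ => nat) b2 s2 n.
Proof. intros -> H. induction n; simpl; auto. rewrite IHn. auto. Qed.

Fixpoint cst (n : nat) : expr := match n with 0 => Zero | S n => Suc (cst n) end.
Definition Pred e := Rec e Zero (Var 0).
Definition Add x y := Rec x y (Suc (Var 1)).
Definition Sub x y := Rec y x (Pred (Var 1)).
Definition Ifz c a b := Call (Rec (Var 0) (Var 1) (Var 4)) [c; a; b].
Definition Eq x y := Ifz (Add (Sub x y) (Sub y x)) (cst 1) Zero.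
Definition Le x y := Ifz (Sub x y) (cst 1) Zero.
Definition Lt x y := Le (Suc x) y.
Definition And x y := Ifz x Zero (Ifz y Zero (cst 1)).
Definition Sgn x := Ifz x Zero (cst 1).

Definition ifz (c a b : nat) : nat := match c with 0 => a | _ => b end.

Lemma b2n_neq_0 b : Nat.b2n b <> 0 <-> b = true.
Proof. destruct b; simpl; split; congruence. Qed.

Lemma sem_cst n env : sem (cst n) env = n.
Proof. induction n; simpl; auto. Qed.
Lemma sem_pred e env : sem (Pred e) env = pred (sem e env).
Proof. simpl. destruct (sem e env); auto. Qed.
Lemma sem_add x y env : sem (Add x y) env = sem x env + sem y env.
Proof. simpl. induction (sem x env); simpl; auto. Qed.
Lemma sem_sub x y env : sem (Sub x y) env = sem x env - sem y env.
Proof.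
  unfold Sub. cbn [sem]. generalize (sem y env) as n.
  induction n; cbn [nat_rect]; try lia. rewrite sem_pred. cbn [sem nth]. rewrite IHn. lia.
Qed.
Lemma sem_ifz c a b env : sem (Ifz c a b) env = ifz (sem c env) (sem a env) (sem b env).
Proof. unfold Ifz. cbn [sem map nth]. destruct (sem c env); reflexivity. Qed.
Lemma sem_eq x y env : sem (Eq x y) env = Nat.b2n (sem x env =? sem y env).
Proof.
  unfold Eq. rewrite sem_ifz, sem_add, !sem_sub, !sem_cst.
  destruct (Nat.eqb_spec (sem x env) (sem y env)) as [->|].
  - rewrite Nat.sub_diag. reflexivity.
  - destruct (sem x env - sem y env + (sem y env - sem x env)) eqn:E; [lia|reflexivity].
Qed.
Lemma sem_le x y env : sem (Le x y) env = Nat.b2n (sem x env <=? sem y env).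
Proof.
  unfold Le. rewrite sem_ifz, sem_sub, !sem_cst.
  destruct (Nat.leb_spec (sem x env) (sem y env)).
  - replace (sem x env - sem y env) with 0 by lia. reflexivity.
  - destruct (sem x env - sem y env) eqn:E; [lia|reflexivity].
Qed.
Lemma sem_lt x y env : sem (Lt x y) env = Nat.b2n (sem x env <? sem y env).
Proof. apply sem_le. Qed.
Lemma sem_and x y env :
  sem (And x y) env = Nat.b2n (negb (sem x env =? 0) && negb (sem y env =? 0)).
Proof.
  unfold And. rewrite !sem_ifz, !sem_cst.
  destruct (sem x env); simpl; auto. destruct (sem y env); simpl; auto.
Qed.
Lemma sem_sgn x env : sem (Sgn x) env = Nat.b2n (negb (sem x env =? 0)).
Proof. unfold Sgn. rewrite sem_ifz, sem_cst. destruct (sem x env); auto. Qed.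

Global Opaque Pred Add Sub Ifz Eq Le Lt And Sgn.

Definition vars k n := map Var (seq k n).

Lemma sem_vars pre w : map (fun e => sem e (pre ++ w)) (vars (length pre) (length w)) = w.
Proof.
  unfold vars. rewrite map_map. cbn [sem].
  revert pre. induction w as [|x w IH]; intros pre; simpl; auto.
  rewrite app_nth2, Nat.sub_diag by lia. simpl. f_equal.
  specialize (IH (pre ++ [x])). rewrite <- app_assoc, length_app, Nat.add_1_r in IH.
  exact IH.
Qed.

(** * A clocked simulation of mu-recursive codes *)

Fixpoint allpos (l : list expr) : expr :=
  match l with [] => cst 1 | e :: l => Ifz e Zero (allpos l) end.

Lemma sem_allpos l env : sem (allpos l) env <> 0 <-> Forall (fun e => sem e env <> 0) l.
Proof.
  induction l as [|e l IH]; simpl; [split; auto|]. rewrite sem_ifz, Forall_cons_iff, <- IH.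
  destruct (sem e env); simpl; split; intuition congruence.
Qed.

Definition mu_step := Ifz (Var 0) (cst 1) (Ifz (Pred (Var 0)) (Suc (Suc (Var 1))) Zero).
Definition mu_result := Ifz (Var 0) Zero (Ifz (Pred (Var 0)) Zero (Pred (Var 0))).

(* [sem (clocked c a) (t :: v)], for [length v = a], is [S y] when [c] outputs
   [y] on [v] with every minimisation searching below [t], and 0 when no
   result is reached within this bound. *)
Fixpoint clocked (c : rcode) (a : nat) {struct c} : expr :=
  match c with
  | RZero => cst 1
  | RSucc => match a with 0 => Zero | S _ => Suc (Suc (Var 1)) end
  | RProj i => if i <? a then Suc (Var (S i)) else Zero
  | RComp f gs => Ifz (allpos (map (fun g => clocked g a) gs)) Zero
                    (Call (clocked f (length gs)) (Var 0 :: map (fun g => Pred (clocked g a)) gs))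
  | RPrec f g => match a with 0 => Zero | S a' =>
        Rec (Var 1) (Call (clocked f a') (Var 0 :: vars 2 a'))
            (Ifz (Var 1) Zero
               (Call (clocked g (S (S a'))) (Var 2 :: Var 0 :: Pred (Var 1) :: vars 4 a'))) end
  | RMu f => Call mu_result [Rec (Suc (Var 0)) Zero
                 (Ifz (Var 1)
                      (Call mu_step [Call (clocked f (S a)) (Var 2 :: Var 0 :: vars 3 a); Var 0])
                      (Var 1))]
  end.

Fixpoint rcode_ind' (P : rcode -> Prop)
  (H0 : P RZero) (H1 : P RSucc) (H2 : forall i, P (RProj i))
  (H3 : forall f gs, P f -> Forall P gs -> P (RComp f gs))
  (H4 : forall f g, P f -> P g -> P (RPrec f g))
  (H5 : forall f, P f -> P (RMu f)) (c : rcode) : P c :=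
  let IH := rcode_ind' P H0 H1 H2 H3 H4 H5 in
  match c with
  | RZero => H0 | RSucc => H1 | RProj i => H2 i
  | RComp f gs => H3 f gs (IH f)
      ((fix go (l : list rcode) : Forall P l :=
         match l with
         | [] => Forall_nil _
         | x :: l' => Forall_cons _ (IH x) (go l')
         end) gs)
  | RPrec f g => H4 f g (IH f) (IH g)
  | RMu f => H5 f (IH f)
  end.

Lemma sem_clocked_comp f gs a t v :
  sem (clocked (RComp f gs) a) (t :: v) =
  ifz (sem (allpos (map (fun g => clocked g a) gs)) (t :: v)) 0
      (sem (clocked f (length gs)) (t :: map (fun g => pred (sem (clocked g a) (t :: v))) gs)).
Proof.
  cbn [clocked]. rewrite sem_ifz. f_equal. cbn [sem map nth]. rewrite map_map.
  do 2 f_equal. apply map_ext. intros g. apply sem_pred.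
Qed.

Lemma sem_clocked_prec f g a t n w : length w = a ->
  sem (clocked (RPrec f g) (S a)) (t :: n :: w) =
  nat_rect (fun _ => nat) (sem (clocked f a) (t :: w))
     (fun i r => ifz r 0 (sem (clocked g (S (S a))) (t :: i :: pred r :: w))) n.
Proof.
  intros <-. cbn [clocked sem]. apply nat_rect_ext.
  - cbn [map sem nth]. do 2 f_equal. apply (sem_vars [t; n] w).
  - intros i r. rewrite sem_ifz. cbn [sem nth]. f_equal. cbn [map sem nth].
    rewrite sem_pred. cbn [sem nth]. do 4 f_equal. apply (sem_vars [i; r; t; n] w).
Qed.

(* The state of a minimisation search: 0 while searching, 1 once the function
   has no value (within the clock) at some point, [S (S j)] once [j] is found. *)
Definition mu_search (F : nat -> nat) (N : nat) : nat :=
  nat_rect (fun _ => nat) 0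
    (fun j st => ifz st (ifz (F j) 1 (ifz (pred (F j)) (S (S j)) 0)) st) N.

Lemma sem_clocked_mu f a t v : length v = a ->
  sem (clocked (RMu f) a) (t :: v) =
  (fun s => ifz s 0 (ifz (pred s) 0 (pred s)))
    (mu_search (fun j => sem (clocked f (S a)) (t :: j :: v)) (S t)).
Proof.
  intros Hv. cbn [clocked]. set (search := Rec _ _ _).
  assert (E : sem search (t :: v) = mu_search (fun j => sem (clocked f (S a)) (t :: j :: v)) (S t)).
  { unfold search. cbn [sem nth]. apply nat_rect_ext; auto. intros j st.
    rewrite sem_ifz. cbn [sem nth]. f_equal. unfold mu_step.
    rewrite !sem_ifz, sem_pred, sem_cst. cbn [sem nth map].
    replace (map _ (vars 3 a)) with v by (subst a; symmetry; apply (sem_vars [j; st; t] v)).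
    reflexivity. }
  unfold mu_result. cbn [sem map]. rewrite !sem_ifz, !sem_pred. cbn [sem nth]. rewrite E.
  reflexivity.
Qed.

Lemma mu_search_zero F N : mu_search F N = 0 -> forall j, j < N -> F j >= 2.
Proof.
  induction N; intros H j Hj; [lia|]. unfold mu_search in H; cbn [nat_rect] in H.
  fold (mu_search F N) in H.
  destruct (mu_search F N) eqn:E; [|simpl in H; lia].
  simpl in H. destruct (F N) as [|[|]] eqn:EF; simpl in H; try lia.
  assert (j < N \/ j = N) as [|Hj'] by lia; subst; auto. lia.
Qed.

Lemma mu_search_found_inv F N y :
  mu_search F N = S (S y) -> F y = 1 /\ forall j, j < y -> F j >= 2.
Proof.
  induction N; intros H; [simpl in H; lia|].
  unfold mu_search in H; cbn [nat_rect] in H; fold (mu_search F N) in H.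
  destruct (mu_search F N) eqn:E; [|simpl in H; subst; auto].
  simpl in H. destruct (F N) as [|[|]] eqn:EF; simpl in H; try lia.
  injection H as <-. split; auto. exact (mu_search_zero F N E).
Qed.

Lemma mu_search_found F y :
  (forall j, j < y -> F j >= 2) -> F y = 1 -> forall N, y < N -> mu_search F N = S (S y).
Proof.
  intros Hlt Hy.
  assert (Hbefore : forall N, N <= y -> mu_search F N = 0).
  { induction N; intros HN; auto. unfold mu_search; cbn [nat_rect]; fold (mu_search F N).
    rewrite IHN by lia. specialize (Hlt N ltac:(lia)). simpl.
    destruct (F N) as [|[|]]; simpl; lia. }
  induction N; intros HN; [lia|]. unfold mu_search; cbn [nat_rect]; fold (mu_search F N).
  assert (y = N \/ y < N) as [<-|] by lia.
  - rewrite (Hbefore y) by lia. simpl. rewrite Hy. reflexivity.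
  - rewrite IHN by auto. reflexivity.
Qed.

Lemma clocked_sound c a t v y :
  length v = a -> sem (clocked c a) (t :: v) = S y -> reval c v y.
Proof.
  revert a t v y.
  induction c as [| |i|f gs IHf IHgs|f g IHf IHg|f IHf] using rcode_ind';
    intros a t v y Hv H.
  - cbn [clocked] in H. rewrite sem_cst in H. injection H as <-. constructor.
  - destruct a; cbn [clocked sem] in H; [discriminate|].
    destruct v as [|x w]; simpl in Hv; [lia|]. injection H as <-. constructor.
  - cbn [clocked] in H. destruct (Nat.ltb_spec i a); cbn [sem] in H; [|discriminate].
    injection H as <-. constructor. lia.
  - rewrite sem_clocked_comp in H.
    destruct (sem (allpos _) (t :: v)) eqn:E; simpl in H; [discriminate|].
    assert (Hargs : Forall (fun e => sem e (t :: v) <> 0) (map (fun g => clocked g a) gs))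
      by (apply sem_allpos; lia).
    econstructor; [|apply (IHf (length gs) t); [rewrite length_map|]; eauto].
    clear E H. induction IHgs as [|g gs IHg IHgs IH]; simpl; constructor.
    + apply Forall_cons_iff in Hargs as [Hg _].
      destruct (sem (clocked g a) (t :: v)) eqn:Eg; [congruence|]. simpl. eauto.
    + apply Forall_cons_iff in Hargs as [_ Hgs]. auto.
  - destruct a as [|a]; [cbn [clocked sem] in H; discriminate|].
    destruct v as [|n w]; simpl in Hv; [lia|]. injection Hv as Hv.
    rewrite sem_clocked_prec in H by auto. revert y H. induction n; intros y H.
    + constructor. eauto.
    + cbn [nat_rect] in H. destruct (nat_rect _ _ _ n) eqn:E; simpl in H; [discriminate|].
      econstructor; [apply (IHn _ eq_refl)|]. apply (IHg (S (S a)) t); simpl; auto.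
  - rewrite sem_clocked_mu in H by auto. cbv beta in H.
    destruct (mu_search _ (S t)) as [|[|s]] eqn:E; simpl in H; try discriminate.
    injection H as <-. apply mu_search_found_inv in E as [E1 E2].
    constructor; [apply (IHf (S a) t); simpl; auto|].
    intros m Hm. specialize (E2 m Hm).
    destruct (sem (clocked f (S a)) (t :: m :: v)) as [|[|k]] eqn:E3; try lia.
    exists k. apply (IHf (S a) t); simpl; auto.
Qed.

Definition eventually (P : nat -> Prop) : Prop := exists t0, forall t, t0 <= t -> P t.

Lemma eventually_and (P Q : nat -> Prop) :
  eventually P -> eventually Q -> eventually (fun t => P t /\ Q t).
Proof.
  intros [t1 H1] [t2 H2]. exists (max t1 t2). intros t Ht. split; [apply H1|apply H2]; lia.
Qed.

Lemma eventually_forall_lt (P : nat -> nat -> Prop) n :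
  (forall m, m < n -> eventually (P m)) -> eventually (fun t => forall m, m < n -> P m t).
Proof.
  induction n as [|n IH]; intros H; [exists 0; intros; lia|].
  destruct (eventually_and _ _ (IH (fun m Hm => H m ltac:(lia))) (H n ltac:(lia))) as [t0 Ht0].
  exists t0. intros t Ht m Hm. destruct (Ht0 t Ht) as [Hlt Hn].
  assert (m < n \/ m = n) as [|Hmn] by lia; subst; auto.
Qed.

Lemma eventually_mono (P Q : nat -> Prop) :
  (forall t, P t -> Q t) -> eventually P -> eventually Q.
Proof. intros H [t0 Ht0]. exists t0. auto. Qed.

Lemma sem_allpos_values gs ys a t v :
  Forall2 (fun g y => sem (clocked g a) (t :: v) = S y) gs ys ->
  sem (allpos (map (fun g => clocked g a) gs)) (t :: v) <> 0 /\
  map (fun g => pred (sem (clocked g a) (t :: v))) gs = ys.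
Proof.
  induction 1 as [|g y gs ys Hg _ [IH1 IH2]]; simpl; [split; auto|].
  rewrite sem_ifz, Hg. simpl. split; [auto|congruence].
Qed.

Lemma revals_length gs v ys : revals gs v ys -> length gs = length ys.
Proof. induction 1; simpl; auto. Qed.

Lemma clocked_mu_eventually f a v n : length v = a ->
  eventually (fun t => sem (clocked f (S a)) (t :: n :: v) = 1) ->
  (forall m, m < n -> eventually (fun t => sem (clocked f (S a)) (t :: m :: v) >= 2)) ->
  eventually (fun t => sem (clocked (RMu f) a) (t :: v) = S n).
Proof.
  intros Hv Hn Hlt.
  destruct (eventually_and _ _ (eventually_forall_lt _ n Hlt) Hn) as [t0 Ht0].
  exists (max n t0). intros t Ht. destruct (Ht0 t ltac:(lia)) as [H1 H2].
  rewrite sem_clocked_mu by auto. cbv beta.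
  rewrite (mu_search_found _ n) by (auto; lia). reflexivity.
Qed.

Lemma clocked_complete : forall c v y, reval c v y -> forall a, length v = a ->
  eventually (fun t => sem (clocked c a) (t :: v) = S y)
with clocked_complete_list : forall gs v ys, revals gs v ys -> forall a, length v = a ->
  eventually (fun t => Forall2 (fun g y => sem (clocked g a) (t :: v) = S y) gs ys).
Proof.
  - intros c v y H. destruct H as [v|x v|i v Hi|f gs v ys y Hs Hf|f g v y Hf
                                   |f g n v r y Hn Hg|f v n Hn Hlt];
      intros a Ha.
    + exists 0. intros. apply sem_cst.
    + exists 0. intros. destruct a; simpl in Ha; [lia|]. reflexivity.
    + exists 0. intros. cbn [clocked]. destruct (Nat.ltb_spec i a); [reflexivity|lia].
    + pose proof (revals_length _ _ _ Hs) as Hlen.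
      eapply eventually_mono;
        [|exact (eventually_and _ _ (clocked_complete_list _ _ _ Hs a Ha)
                   (clocked_complete _ _ _ Hf (length gs) (eq_sym Hlen)))].
      intros t [H1 H2]. rewrite sem_clocked_comp.
      destruct (sem_allpos_values _ _ _ _ _ H1) as [Hpos ->].
      destruct (sem (allpos _) _); [congruence|]. exact H2.
    + destruct a as [|a]; [simpl in Ha; lia|]. injection Ha as Ha.
      eapply eventually_mono; [|exact (clocked_complete _ _ _ Hf a Ha)].
      intros t Ht. rewrite sem_clocked_prec by auto. exact Ht.
    + destruct a as [|a]; [simpl in Ha; lia|]. injection Ha as Ha.
      eapply eventually_mono;
        [|exact (eventually_and _ _ (clocked_complete _ _ _ Hn (S a) ltac:(simpl; lia))
                   (clocked_complete _ _ _ Hg (S (S a)) ltac:(simpl; lia)))].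
      intros t [H1 H2]. rewrite sem_clocked_prec in * by auto. cbn [nat_rect].
      rewrite H1. exact H2.
    + apply clocked_mu_eventually;
        [exact Ha|exact (clocked_complete _ _ _ Hn (S a) ltac:(simpl; lia))|].
      intros m Hm. destruct (Hlt m Hm) as [k Hk].
      eapply eventually_mono; [|exact (clocked_complete _ _ _ Hk (S a) ltac:(simpl; lia))].
      intros t ->. lia.
  - intros gs v ys H. destruct H as [v|g gs v y ys Hg Hgs]; intros a Ha.
    + exists 0. constructor.
    + eapply eventually_mono;
        [|exact (eventually_and _ _ (clocked_complete _ _ _ Hg a Ha)
                   (clocked_complete_list _ _ _ Hgs a Ha))].
      intros t [H1 H2]. constructor; auto.
Qed.

Definition sigma1 (P : nat -> Prop) : Prop :=
  exists E : expr, forall m, P m <-> exists t, sem E [t; m] <> 0.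

Lemma re_set_sigma1 P : re_set P -> sigma1 P.
Proof.
  intros [c Hc]. exists (clocked c 1). intros m. rewrite Hc. split.
  - intros [y Hy]. destruct (clocked_complete _ _ _ Hy 1 eq_refl) as [t0 Ht0].
    exists t0. rewrite Ht0; auto.
  - intros [t Ht]. destruct (sem (clocked c 1) [t; m]) as [|y] eqn:E; [congruence|].
    exists y. exact (clocked_sound c 1 t [m] y eq_refl E).
Qed.

(** * Computing on codes of lists *)

Definition tri (s : nat) : nat := nat_rect (fun _ => nat) 0 (fun i r => r + S i) s.

Lemma tri_S s : tri (S s) = tri s + S s.
Proof. reflexivity. Qed.

Lemma tri_mono a b : a <= b -> tri a <= tri b.
Proof. induction 1; auto. rewrite tri_S. lia. Qed.

Lemma tri_ge s : s <= tri s.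
Proof. induction s; auto. rewrite tri_S. lia. Qed.

Lemma cpair_tri x y : cpair x y = tri (x + y) + y.
Proof.
  assert (Hdouble : forall s, 2 * tri s = s * (s + 1)) by (induction s; auto; rewrite tri_S; nia).
  unfold cpair. f_equal. rewrite <- Hdouble, Nat.mul_comm. apply Nat.div_mul. lia.
Qed.

Definition diag (m : nat) : nat :=
  nat_rect (fun _ => nat) 0 (fun i r => r + Nat.b2n (tri (S i) <=? m)) m.
Definition unpair1 m := diag m - (m - tri (diag m)).
Definition unpair2 m := m - tri (diag m).

Lemma diag_spec m s : tri s <= m < tri (S s) -> diag m = s.
Proof.
  intros Hs.
  assert (Hcount : forall N,
    nat_rect (fun _ => nat) 0 (fun i r => r + Nat.b2n (tri (S i) <=? m)) N = min N s).
  { induction N; auto. cbn [nat_rect]. rewrite IHN.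
    destruct (Nat.leb_spec (tri (S N)) m); cbn [Nat.b2n].
    - assert (S N <= s) by (destruct (le_lt_dec (S N) s); auto; pose proof (tri_mono (S s) (S N));
                               lia).
      lia.
    - assert (s <= N) by (destruct (le_lt_dec s N); auto; pose proof (tri_mono (S N) s); lia).
      lia. }
  unfold diag. rewrite Hcount. pose proof (tri_ge s). lia.
Qed.

Lemma unpair_cpair x y : unpair1 (cpair x y) = x /\ unpair2 (cpair x y) = y.
Proof.
  rewrite cpair_tri. unfold unpair1, unpair2.
  rewrite (diag_spec _ (x + y)) by (rewrite tri_S; lia). lia.
Qed.

Lemma cpair_surj m : exists x y, cpair x y = m.
Proof.
  assert (exists s, tri s <= m < tri (S s)) as [s Hs].
  { induction m as [|m [s Hs]]; [exists 0; simpl; lia|].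
    destruct (Nat.eq_dec (S m) (tri (S s))).
    - exists (S s). rewrite (tri_S (S s)). lia.
    - exists s. lia. }
  exists (s - (m - tri s)), (m - tri s). rewrite cpair_tri. rewrite tri_S in Hs.
  replace (s - (m - tri s) + (m - tri s)) with s by lia. lia.
Qed.

Lemma code_list_inj l1 l2 : code_list l1 = code_list l2 -> l1 = l2.
Proof.
  revert l2; induction l1; intros [|b l2]; simpl; intros H; try discriminate; auto.
  injection H as H. destruct (unpair_cpair a (code_list l1)), (unpair_cpair b (code_list l2)).
  rewrite H in *. f_equal; [congruence|]. apply IHl1. congruence.
Qed.

Lemma code_list_surj m : exists l, code_list l = m.
Proof.
  induction m as [m IH] using (well_founded_induction lt_wf).
  destruct m as [|m]; [exists []; reflexivity|].
  destruct (cpair_surj m) as [x [y <-]].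
  destruct (IH y) as [l Hl]; [rewrite cpair_tri; lia|].
  exists (x :: l). simpl. rewrite Hl. reflexivity.
Qed.

Lemma length_le_code_list l : length l <= code_list l.
Proof. induction l; simpl; auto. rewrite cpair_tri. lia. Qed.

Definition code_hd m := unpair1 (pred m).
Definition code_tl m := unpair2 (pred m).

Lemma code_hd_code_list l : code_hd (code_list l) = hd 0 l.
Proof. destruct l; [reflexivity|apply unpair_cpair]. Qed.

Lemma code_tl_code_list l : code_tl (code_list l) = code_list (tl l).
Proof. destruct l; [reflexivity|apply unpair_cpair]. Qed.

Definition Tri e := Call (Rec (Var 0) Zero (Add (Var 1) (Suc (Var 0)))) [e].
Definition Cons x l := Suc (Add (Tri (Add x l)) l).
Definition Diag := Rec (Var 0) Zero (Add (Var 1) (Le (Tri (Suc (Var 0))) (Var 2))).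
Definition Unpair1 := Sub (Call Diag [Var 0]) (Sub (Var 0) (Tri (Call Diag [Var 0]))).
Definition Unpair2 := Sub (Var 0) (Tri (Call Diag [Var 0])).
Definition Hd e := Call Unpair1 [Pred e].
Definition Tl e := Call Unpair2 [Pred e].

Lemma sem_tri e env : sem (Tri e) env = tri (sem e env).
Proof.
  unfold Tri. cbn [sem map nth]. apply nat_rect_ext; auto.
  intros. rewrite sem_add. reflexivity.
Qed.
Lemma sem_cons x l env : sem (Cons x l) env = S (cpair (sem x env) (sem l env)).
Proof. unfold Cons. cbn [sem]. rewrite sem_add, sem_tri, sem_add, cpair_tri. reflexivity. Qed.
Lemma sem_diag m : sem Diag [m] = diag m.
Proof.
  unfold Diag. cbn [sem nth]. apply nat_rect_ext; auto.
  intros. rewrite sem_add, sem_le, sem_tri. reflexivity.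
Qed.
Lemma sem_hd e env : sem (Hd e) env = code_hd (sem e env).
Proof.
  unfold Hd, Unpair1. cbn [sem map]. rewrite !sem_sub, sem_tri, sem_pred. cbn [sem map nth].
  rewrite sem_diag. reflexivity.
Qed.
Lemma sem_tl e env : sem (Tl e) env = code_tl (sem e env).
Proof.
  unfold Tl, Unpair2. cbn [sem map]. rewrite !sem_sub, sem_tri, sem_pred. cbn [sem map nth].
  rewrite sem_diag. reflexivity.
Qed.
Global Opaque Tri Cons Hd Tl.

Definition Skip i m := Call (Rec (Var 0) (Var 1) (Tl (Var 1))) [i; m].

Lemma sem_skip i m env L :
  sem m env = code_list L -> sem (Skip i m) env = code_list (skipn (sem i env) L).
Proof.
  intros HL. unfold Skip. cbn [sem map nth]. rewrite HL.
  assert (Hskip : forall M N, nat_rect (fun _ => nat) (code_list L)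
            (fun j r => sem (Tl (Var 1)) [j; r; M; code_list L]) N = code_list (skipn N L)).
  { intros M N. induction N as [|N IH]; auto.
    cbn [nat_rect]. rewrite sem_tl. cbn [sem nth]. rewrite IH, code_tl_code_list. f_equal.
    clear. revert L. induction N; intros [|x L]; simpl; auto. }
  apply Hskip.
Qed.

Definition FoldL np st init lst ps :=
  Call (Rec (Var 0) (Var 1)
          (Ifz (Skip (Var 0) (Var 2)) (Var 1)
             (Call st (Var 1 :: Hd (Skip (Var 0) (Var 2)) :: vars 4 np))))
       (lst :: init :: ps).

Lemma sem_foldl np st init lst ps env L :
  length ps = np -> sem lst env = code_list L ->
  sem (FoldL np st init lst ps) env =
  fold_left (fun acc x => sem st (acc :: x :: map (fun e => sem e env) ps)) L (sem init env).
Proof.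
  intros Hp HL. unfold FoldL. cbn [sem map nth]. rewrite HL.
  set (F := fun acc x => sem st (acc :: x :: map (fun e => sem e env) ps)).
  assert (Hstep : forall N, nat_rect (fun _ => nat) (sem init env)
      (fun i r => sem (Ifz (Skip (Var 0) (Var 2)) (Var 1)
                        (Call st (Var 1 :: Hd (Skip (Var 0) (Var 2)) :: vars 4 np)))
                    (i :: r :: code_list L :: sem init env :: map (fun a => sem a env) ps)) N
    = fold_left F (firstn N L) (sem init env)).
  { induction N as [|N IH]; auto.
    cbn [nat_rect]. rewrite IH, sem_ifz, (sem_skip _ _ _ L) by reflexivity.
    cbn [sem map nth]. rewrite sem_hd, (sem_skip _ _ _ L) by reflexivity. cbn [sem nth].
    replace (map _ (vars 4 np)) with (map (fun e => sem e env) ps)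
      by (subst np; rewrite <- (length_map (fun a => sem a env) ps); symmetry;
          apply (sem_vars [_; _; _; _])).
    destruct (skipn N L) as [|x L'] eqn:E.
    - rewrite !firstn_all2; [reflexivity| |]; apply skipn_all_iff in E; lia.
    - rewrite code_hd_code_list. cbn [code_list ifz hd].
      rewrite <- (firstn_skipn N L) at 2. rewrite E, firstn_app, firstn_firstn.
      assert (N < length L) by (destruct (le_lt_dec (length L) N); auto;
                                rewrite skipn_all2 in E by lia; discriminate).
      rewrite length_firstn, Nat.min_r, Nat.min_l, Nat.sub_succ_l, Nat.sub_diag by lia.
      cbn [firstn]. rewrite fold_left_app. reflexivity. }
  rewrite Hstep, firstn_all2; [reflexivity|]. apply length_le_code_list.
Qed.
Global Opaque Skip FoldL.

Definition Len e := FoldL 0 (Suc (Var 0)) Zero e [].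
Definition Rev e := FoldL 0 (Cons (Var 1) (Var 0)) Zero e [].
Definition App u v := FoldL 0 (Cons (Var 1) (Var 0)) v (Rev u) [].
Definition Nth j m := Hd (Skip j m).

Lemma sem_len e env L : sem e env = code_list L -> sem (Len e) env = length L.
Proof.
  intros H. unfold Len. rewrite (sem_foldl _ _ _ _ _ _ L) by auto. cbn [sem nth].
  rewrite <- (Nat.add_0_r (length L)). generalize 0. clear H.
  induction L as [|x L IH]; intros n; simpl; auto. rewrite IH, Nat.add_succ_r. reflexivity.
Qed.

Lemma fold_left_ext {A B} (f g : A -> B -> A) l a :
  (forall x y, f x y = g x y) -> fold_left f l a = fold_left g l a.
Proof. intros H. revert a; induction l; simpl; intros; auto. rewrite H. auto. Qed.

Lemma fold_left_cons_code (L A : list nat) :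
  fold_left (fun acc x => S (cpair x acc)) L (code_list A) = code_list (rev L ++ A).
Proof.
  revert A; induction L as [|x L IH]; intros A; simpl; auto.
  change (S (cpair x (code_list A))) with (code_list (x :: A)).
  rewrite IH, <- app_assoc. reflexivity.
Qed.

Lemma sem_rev e env L : sem e env = code_list L -> sem (Rev e) env = code_list (rev L).
Proof.
  intros H. unfold Rev. rewrite (sem_foldl _ _ _ _ _ _ L) by auto.
  rewrite (fold_left_ext _ (fun acc x => S (cpair x acc)))
    by (intros; rewrite sem_cons; reflexivity).
  cbn [sem nth]. change 0 with (code_list []). rewrite fold_left_cons_code, app_nil_r.
  reflexivity.
Qed.

Lemma sem_app u v env U V : sem u env = code_list U -> sem v env = code_list V ->
  sem (App u v) env = code_list (U ++ V).
Proof.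
  intros HU HV. unfold App. rewrite (sem_foldl _ _ _ _ _ _ (rev U)) by (auto; apply sem_rev; auto).
  rewrite (fold_left_ext _ (fun acc x => S (cpair x acc)))
    by (intros; rewrite sem_cons; reflexivity).
  cbn [sem nth]. rewrite HV, fold_left_cons_code, rev_involutive. reflexivity.
Qed.

Lemma sem_nth j m env L : sem m env = code_list L -> sem (Nth j m) env = nth (sem j env) L 0.
Proof.
  intros H. unfold Nth. rewrite sem_hd, (sem_skip _ _ _ L), code_hd_code_list by auto.
  generalize (sem j env). clear H. induction L; intros [|n]; simpl; auto.
Qed.

Definition Firstn j m :=
  Rev (FoldL 1 (Ifz (Lt (Len (Var 0)) (Var 2)) (Var 0) (Cons (Var 1) (Var 0))) Zero m [j]).

Lemma sem_firstn j m env L :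
  sem m env = code_list L -> sem (Firstn j m) env = code_list (firstn (sem j env) L).
Proof.
  intros H. unfold Firstn. erewrite sem_rev; [rewrite rev_involutive; reflexivity|].
  rewrite (sem_foldl _ _ _ _ _ _ L) by auto. cbn [map sem]. set (n := sem j env).
  assert (Hacc : forall P, fold_left (fun acc x =>
      sem (Ifz (Lt (Len (Var 0)) (Var 2)) (Var 0) (Cons (Var 1) (Var 0))) [acc; x; n]) L
      (code_list (rev (firstn n P))) = code_list (rev (firstn n (P ++ L)))).
  { clear H. induction L as [|x L IH]; intros P; [rewrite app_nil_r; reflexivity|]. simpl.
    rewrite sem_ifz, sem_lt, (sem_len _ _ (rev (firstn n P))) by reflexivity.
    cbn [sem nth]. rewrite length_rev, length_firstn.
    replace (P ++ x :: L) with ((P ++ [x]) ++ L) by (rewrite <- app_assoc; reflexivity).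
    rewrite <- IH. f_equal. rewrite firstn_app.
    destruct (Nat.ltb_spec (Nat.min n (length P)) n); cbn [Nat.b2n ifz].
    - rewrite sem_cons. cbn [sem nth].
      replace (n - length P) with (S (n - length P - 1)) by lia. simpl.
      rewrite (firstn_all2 (n:=n) P), rev_app_distr, firstn_nil by lia. reflexivity.
    - replace (n - length P) with 0 by lia. simpl. rewrite app_nil_r. reflexivity. }
  specialize (Hacc []). rewrite firstn_nil in Hacc. exact Hacc.
Qed.

Definition AllLt m k := FoldL 1 (And (Var 0) (Lt (Var 1) (Var 2))) (cst 1) m [k].

Lemma sem_alllt m k env L : sem m env = code_list L ->
  sem (AllLt m k) env = Nat.b2n (forallb (fun x => x <? sem k env) L).
Proof.
  intros H. unfold AllLt. rewrite (sem_foldl _ _ _ _ _ _ L), sem_cst by auto. cbn [map].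
  assert (Hacc : forall b, fold_left (fun acc x =>
      sem (And (Var 0) (Lt (Var 1) (Var 2))) [acc; x; sem k env]) L (Nat.b2n b)
      = Nat.b2n (b && forallb (fun x => x <? sem k env) L)).
  { clear H. induction L as [|x L IH]; intros b; simpl; [destruct b; reflexivity|].
    rewrite sem_and, sem_lt. cbn [sem nth].
    replace (negb (Nat.b2n b =? 0) && negb (Nat.b2n (x <? sem k env) =? 0))
      with (b && (x <? sem k env)) by (destruct b, (x <? sem k env); reflexivity).
    rewrite IH, andb_assoc. reflexivity. }
  apply (Hacc true).
Qed.

Fixpoint Tab (l : list nat) (x : expr) : expr :=
  match l with [] => Zero | c :: l' => Ifz x (cst c) (Tab l' (Pred x)) end.

Lemma sem_tab l x env : sem (Tab l x) env = nth (sem x env) l 0.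
Proof.
  revert x; induction l; intros x; simpl; [destruct (sem x env); reflexivity|].
  rewrite sem_ifz, sem_cst. destruct (sem x env) eqn:E; simpl; auto.
  rewrite IHl, sem_pred, E. reflexivity.
Qed.

Definition Bex N body ps :=
  Call (Rec (Var 0) Zero (Ifz (Var 1) (Sgn (Call body (Var 0 :: vars 3 (length ps)))) (cst 1)))
       (N :: ps).

Lemma sem_bex N body ps env :
  sem (Bex N body ps) env =
  Nat.b2n (existsb (fun i => negb (sem body (i :: map (fun e => sem e env) ps) =? 0))
                   (seq 0 (sem N env))).
Proof.
  unfold Bex. cbn [sem map nth]. set (pv := map (fun a => sem a env) ps).
  generalize (sem N env) at 1 as M. intros M.
  induction (sem N env) as [|n IH]; [reflexivity|].
  cbn [nat_rect]. rewrite IH, seq_S, existsb_app, sem_ifz, sem_sgn, sem_cst. cbn [sem map nth].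
  replace (map _ (vars 3 (length ps))) with pv
    by (symmetry; replace (length ps) with (length pv) by apply length_map;
        apply (sem_vars [_; _; _])).
  destruct (existsb _ (seq 0 n)); simpl; [reflexivity|]. rewrite orb_false_r. reflexivity.
Qed.

Global Opaque Len Rev App Nth Firstn AllLt Bex.

(** * Semi-decidable relations *)

Definition sigma1_rel (Rel : list nat -> list nat -> Prop) : Prop :=
  exists E : expr, forall W Y,
    Rel W Y <-> exists t, sem E [t; code_list W; code_list Y] <> 0.

(* A certificate for [clos_refl_sym_trans Rel W Y] is a list of records
   [[W'; t; dir]], one per step to the next word [W'], where [t] witnesses
   [Rel W W'] (if [dir = 0]) or [Rel W' W].  The accumulator of the check is
   [S] of the code of the current word, or 0 after a failed step. *)
Definition rst_check_step (E : expr) :=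
  Ifz (Var 0) Zero
    (Ifz (Ifz (Nth (cst 2) (Var 1))
              (Call E [Nth (cst 1) (Var 1); Pred (Var 0); Nth (cst 0) (Var 1)])
              (Call E [Nth (cst 1) (Var 1); Nth (cst 0) (Var 1); Pred (Var 0)]))
         Zero (Suc (Nth (cst 0) (Var 1)))).

Definition rst_check (E : expr) :=
  Eq (FoldL 0 (rst_check_step E) (Suc (Var 1)) (Var 0) []) (Suc (Var 2)).

Lemma sem_rst_check_step E acc r :
  sem (rst_check_step E) [acc; code_list r] =
  ifz acc 0 (ifz (ifz (nth 2 r 0) (sem E [nth 1 r 0; pred acc; nth 0 r 0])
                                  (sem E [nth 1 r 0; nth 0 r 0; pred acc]))
                 0 (S (nth 0 r 0))).
Proof.
  unfold rst_check_step. rewrite !sem_ifz. cbn [sem map nth].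
  rewrite sem_pred, !(sem_nth _ _ _ r), !sem_cst by reflexivity. reflexivity.
Qed.

Definition rst_run (E : expr) (L : list nat) (acc : nat) : nat :=
  fold_left (fun acc x => sem (rst_check_step E) [acc; x]) L acc.

Section RstClosure.

Variable Rel : list nat -> list nat -> Prop.
Variable E : expr.
Hypothesis HE : forall W Y, Rel W Y <-> exists t, sem E [t; code_list W; code_list Y] <> 0.

Lemma rst_run_failed L : rst_run E L 0 = 0.
Proof.
  unfold rst_run. induction L as [|r L IH]; [reflexivity|]. cbn [fold_left].
  destruct (code_list_surj r) as [R <-]. rewrite sem_rst_check_step. exact IH.
Qed.

Lemma rst_run_sound L W Y :
  rst_run E L (S (code_list W)) = S (code_list Y) -> clos_refl_sym_trans _ Rel W Y.
Proof.
  revert W. induction L as [|r L IH]; intros W H.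
  - injection H as H. apply code_list_inj in H as ->. apply rst_refl.
  - unfold rst_run in H. simpl in H. destruct (code_list_surj r) as [R <-].
    rewrite sem_rst_check_step in H. cbn [ifz pred] in H.
    destruct (code_list_surj (nth 0 R 0)) as [W' HW'].
    destruct (ifz (nth 2 R 0) _ _) as [|] eqn:Hok; cbn [ifz] in H.
    { fold (rst_run E L 0) in H. rewrite rst_run_failed in H. discriminate. }
    rewrite <- HW' in H, Hok. apply rst_trans with W'; [|exact (IH W' H)].
    destruct (nth 2 R 0); cbn [ifz] in Hok.
    + apply rst_step, HE. exists (nth 1 R 0). rewrite Hok. discriminate.
    + apply rst_sym, rst_step, HE. exists (nth 1 R 0). rewrite Hok. discriminate.
Qed.

Lemma rst_run_complete W Y :
  clos_refl_sym_trans _ Rel W Y -> exists L, rst_run E L (S (code_list W)) = S (code_list Y).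
Proof.
  rewrite clos_rst_rst1n_iff. induction 1 as [W|W W' Y Hstep _ [L HL]].
  - exists []. reflexivity.
  - assert (Hrec : exists r, sem (rst_check_step E) [S (code_list W); r] = S (code_list W')).
    { destruct Hstep as [Hs|Hs]; apply HE in Hs as [t Ht].
      - exists (code_list [code_list W'; t; 0]). rewrite sem_rst_check_step. cbn [ifz nth pred].
        destruct (sem E _); [congruence|reflexivity].
      - exists (code_list [code_list W'; t; 1]). rewrite sem_rst_check_step. cbn [ifz nth pred].
        destruct (sem E _); [congruence|reflexivity]. }
    destruct Hrec as [r Hr]. exists (r :: L). unfold rst_run. simpl. rewrite Hr. exact HL.
Qed.

Lemma sem_rst_check C W Y :
  sem (rst_check E) [C; W; Y] <> 0 <-> exists L, code_list L = C /\ rst_run E L (S W) = S Y.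
Proof.
  destruct (code_list_surj C) as [L <-]. unfold rst_check.
  rewrite sem_eq, (sem_foldl _ _ _ _ _ _ L) by reflexivity. cbn [sem nth map].
  fold (rst_run E L (S W)). split.
  - intros H. exists L. split; [reflexivity|]. apply Nat.eqb_eq. destruct (_ =? _); auto.
  - intros [L' [HL' H]]. apply code_list_inj in HL' as ->. rewrite H, Nat.eqb_refl. discriminate.
Qed.

End RstClosure.

Lemma sigma1_rel_rst Rel : sigma1_rel Rel -> sigma1_rel (clos_refl_sym_trans _ Rel).
Proof.
  intros [E HE]. exists (rst_check E). intros W Y. split.
  - intros H. destruct (rst_run_complete Rel E HE W Y H) as [L HL].
    exists (code_list L). apply sem_rst_check. eauto.
  - intros [C HC]. apply sem_rst_check in HC as [L [_ HL]].
    exact (rst_run_sound Rel E HE L W Y HL).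
Qed.

(** * The word problem of a recursively presented group is semi-decidable *)

Definition letter_of (l : nat) : letter := (Nat.div2 l, Nat.odd l).

Lemma letter_code_of l : letter_code (letter_of l) = l.
Proof. unfold letter_code, letter_of. cbn [fst snd]. symmetry. exact (Nat.div2_odd l). Qed.

Lemma letter_of_code a : letter_of (letter_code a) = a.
Proof.
  destruct a as [i []]; unfold letter_of, letter_code; cbn [fst snd].
  - replace (2 * i + 1) with (S (2 * i)) by lia.
    rewrite Nat.div2_succ_double, Nat.odd_succ, Nat.even_mul. reflexivity.
  - rewrite Nat.add_0_r, Nat.div2_double, Nat.odd_mul. reflexivity.
Qed.

Lemma map_letter_of_code w : map letter_of (map letter_code w) = w.
Proof. rewrite map_map. erewrite map_ext; [apply map_id|]. apply letter_of_code. Qed.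

Lemma map_letter_code_of W : map letter_code (map letter_of W) = W.
Proof. rewrite map_map. erewrite map_ext; [apply map_id|]. apply letter_code_of. Qed.

Definition coded_pstep n R (W Y : list nat) : Prop :=
  pstep n R (map letter_of W) (map letter_of Y).

(* Checks a step [W = U ++ V] to [Y = U ++ P ++ V] in the environment
   [[W; Y; U; V; kind; q; s]]: for [kind = 0], [P] is the cancelling pair
   [t_q^(+-1) t_q^(-+1)] starting with the letter coded by [2 q + s]; otherwise
   [q] is the code of the relator [P] and [s] a clock for its enumeration. *)
Definition inserted_word :=
  Ifz (Var 4)
    (Cons (Add (Add (Var 5) (Var 5)) (Var 6))
       (Cons (Add (Add (Var 5) (Var 5)) (Sub (cst 1) (Var 6))) Zero))
    (Var 5).

Definition pstep_body (n : nat) (ER : expr) :=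
  And (Ifz (Var 4) (And (Lt (Var 5) (cst n)) (Lt (Var 6) (cst 2))) (Call ER [Var 6; Var 5]))
      (And (Eq (Var 0) (App (Var 2) (Var 3)))
           (Eq (Var 1) (App (Var 2) (App inserted_word (Var 3))))).

Definition pstep_check (n : nat) (ER : expr) :=
  Call (pstep_body n ER)
    [Var 1; Var 2; Nth (cst 0) (Var 0); Nth (cst 1) (Var 0); Nth (cst 2) (Var 0);
     Nth (cst 3) (Var 0); Nth (cst 4) (Var 0)].

Lemma cancelling_pair_code q b :
  [q + q + Nat.b2n b; q + q + (1 - Nat.b2n b)] = [letter_code (q, b); letter_code (q, negb b)].
Proof.
  destruct b; unfold letter_code; cbn [fst snd negb Nat.b2n]; (f_equal; [lia|f_equal; lia]).
Qed.

Lemma sem_pstep_body n ER W Y U V kind q s :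
  sem (pstep_body n ER) [code_list W; code_list Y; code_list U; code_list V; kind; q; s] <> 0 <->
  W = U ++ V /\
  ((kind = 0 /\ q < n /\ exists b, s = Nat.b2n b /\
      Y = U ++ [letter_code (q, b); letter_code (q, negb b)] ++ V) \/
   (kind <> 0 /\ sem ER [s; q] <> 0 /\ exists P, q = code_list P /\ Y = U ++ P ++ V)).
Proof.
  unfold pstep_body.
  rewrite sem_and, b2n_neq_0, andb_true_iff, !negb_true_iff, !Nat.eqb_neq, sem_and, b2n_neq_0,
    andb_true_iff, !negb_true_iff, !Nat.eqb_neq, !sem_eq, !b2n_neq_0, !Nat.eqb_eq, sem_ifz.
  cbn [sem nth map]. rewrite (sem_app _ _ _ U V) by reflexivity.
  assert (Hcode : forall A B, code_list A = code_list B <-> A = B)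
    by (split; [apply code_list_inj|intros ->; reflexivity]).
  assert (Hins : sem inserted_word [code_list W; code_list Y; code_list U; code_list V; kind; q; s]
                 = ifz kind (code_list [q + q + s; q + q + (1 - s)]) q).
  { unfold inserted_word. rewrite sem_ifz, !sem_cons, !sem_add, sem_sub, sem_cst. reflexivity. }
  destruct kind as [|kind]; cbn [ifz] in Hins |- *.
  - rewrite sem_and, !sem_lt, !sem_cst. cbn [sem nth]. set (P := [q + q + s; q + q + (1 - s)]).
    rewrite (sem_app _ _ _ U (P ++ V))
      by (reflexivity || (apply sem_app; [exact Hins|reflexivity])).
    rewrite !Hcode, b2n_neq_0, andb_true_iff, !negb_true_iff, !Nat.eqb_neq, !b2n_neq_0,
      !Nat.ltb_lt.
    split.
    + intros [[Hq Hs] [HW HY]]. split; [exact HW|]. left. split; [reflexivity|].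
      split; [exact Hq|]. subst P Y.
      destruct s as [|[|s]]; [exists false|exists true|lia];
        rewrite <- cancelling_pair_code; split; reflexivity.
    + intros [HW [[_ [Hq [b [-> HY]]]]|[[] _]]]; [|reflexivity]. split.
      * split; [exact Hq|]. destruct b; cbn; lia.
      * split; [exact HW|]. subst Y P. rewrite cancelling_pair_code. reflexivity.
  - destruct (code_list_surj q) as [P <-].
    rewrite (sem_app _ _ _ U (P ++ V))
      by (reflexivity || (apply sem_app; [exact Hins|reflexivity])).
    rewrite !Hcode. split.
    + intros [HER [HW HY]]. split; [exact HW|]. right. repeat split; eauto.
    + intros [HW [[Hk _]|[_ [HER [P' [HP' HY]]]]]]; [discriminate|].
      apply code_list_inj in HP' as <-. auto.
Qed.

Lemma sem_pstep_check n ER T W Y :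
  sem (pstep_check n ER) [code_list T; code_list W; code_list Y] =
  sem (pstep_body n ER) [code_list W; code_list Y; nth 0 T 0; nth 1 T 0; nth 2 T 0;
                         nth 3 T 0; nth 4 T 0].
Proof.
  unfold pstep_check. cbn [sem map nth]. rewrite !(sem_nth _ _ _ T), !sem_cst; reflexivity.
Qed.

Lemma sigma1_rel_coded_pstep n R :
  sigma1 (fun m => exists w, word_code w = m /\ R w) -> sigma1_rel (coded_pstep n R).
Proof.
  intros [ER HER]. exists (pstep_check n ER). intros W Y. split.
  - unfold coded_pstep. intros H.
    rewrite <- (map_letter_code_of W), <- (map_letter_code_of Y).
    destruct H as [u v i b Hi|u v r Hr]; rewrite !map_app.
    + exists (code_list [code_list (map letter_code u); code_list (map letter_code v);
                         0; i; Nat.b2n b]).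
      rewrite sem_pstep_check. cbn [nth]. apply sem_pstep_body. split; [reflexivity|].
      left. split; [reflexivity|]. split; [exact Hi|]. exists b. split; reflexivity.
    + assert (Hcode : exists w, word_code w = word_code r /\ R w) by eauto.
      apply HER in Hcode as [s Hs].
      exists (code_list [code_list (map letter_code u); code_list (map letter_code v);
                         1; word_code r; s]).
      rewrite sem_pstep_check. cbn [nth]. apply sem_pstep_body. split; [reflexivity|].
      right. split; [discriminate|]. split; [exact Hs|]. eexists. split; reflexivity.
  - intros [t Ht]. destruct (code_list_surj t) as [T <-].
    destruct (code_list_surj (nth 0 T 0)) as [U HU], (code_list_surj (nth 1 T 0)) as [V HV].
    rewrite sem_pstep_check, <- HU, <- HV in Ht. apply sem_pstep_body in Ht.
    unfold coded_pstep. destruct Ht as [-> [[_ [Hq [b [_ ->]]]]|[_ [Hs [P [HP ->]]]]]];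
      rewrite !map_app.
    + cbn [map]. rewrite !letter_of_code. apply ps_free. exact Hq.
    + assert (HR : exists w, word_code w = code_list P /\ R w)
        by (apply HER; exists (nth 4 T 0); rewrite <- HP; exact Hs).
      destruct HR as [w [Hw HR]]. apply code_list_inj in Hw as <-.
      rewrite map_letter_of_code. apply ps_rel. exact HR.
Qed.

Lemma clos_rst_map {A B} (R1 : A -> A -> Prop) (R2 : B -> B -> Prop) (f : A -> B) :
  (forall x y, R1 x y -> R2 (f x) (f y)) ->
  forall x y, clos_refl_sym_trans _ R1 x y -> clos_refl_sym_trans _ R2 (f x) (f y).
Proof.
  intros H x y Hr. induction Hr.
  - apply rst_step; auto.
  - apply rst_refl.
  - apply rst_sym; auto.
  - eapply rst_trans; eauto.
Qed.

Lemma trivial_in_pres_coded n R w :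
  trivial_in_pres n R w <->
  clos_refl_sym_trans _ (coded_pstep n R) (map letter_code w) [].
Proof.
  unfold trivial_in_pres. split; intros H.
  - apply (clos_rst_map _ (coded_pstep n R) (map letter_code)) in H; [exact H|].
    intros x y Hxy. unfold coded_pstep. rewrite !map_letter_of_code. exact Hxy.
  - apply (clos_rst_map _ (pstep n R) (map letter_of)) in H; [|easy].
    rewrite map_letter_of_code in H. exact H.
Qed.

Lemma trivial_in_pres_sigma1 n R :
  re_set (fun m => exists w, word_code w = m /\ R w) ->
  exists E, forall w, trivial_in_pres n R w <->
                      exists t, sem E [t; code_list (map letter_code w)] <> 0.
Proof.
  intros HR.
  destruct (sigma1_rel_rst _ (sigma1_rel_coded_pstep n R (re_set_sigma1 _ HR))) as [E HE].
  exists (Call E [Var 0; Var 1; Zero]). intros w.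
  rewrite trivial_in_pres_coded, HE. reflexivity.
Qed.

(** * Subshifts with semi-decidable forbidden words *)

Lemma decidable_set_of_expr (D : expr) (P : list nat -> Prop) :
  (forall m, sem D [m] <= 1) -> (forall u, sem D [code_list u] <> 0 <-> P u) ->
  decidable_set (fun m => exists w, code_list w = m /\ P w).
Proof.
  intros H01 HD. destruct (computable_sem D 1) as [c Hc]. exists c. intros m.
  destruct (code_list_surj m) as [u <-]. specialize (Hc [code_list u] eq_refl). split.
  - intros [w [Hw HP]]. apply code_list_inj in Hw as ->. apply HD in HP.
    specialize (H01 (code_list u)). replace 1 with (sem D [code_list u]) by lia. exact Hc.
  - intros HP. replace 0 with (sem D [code_list u]); [exact Hc|].
    destruct (sem D [code_list u]) eqn:E; [reflexivity|].
    exfalso. apply HP. exists u. split; [reflexivity|]. apply HD. lia.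
Qed.

Definition padded (k : nat) (E : expr) :=
  And (AllLt (Var 0) (cst k))
      (Bex (Suc (Len (Var 0)))
           (And (Lt Zero (Var 0))
                (Bex (Suc (Len (Var 1))) (Call E [Var 0; Firstn (Var 1) (Var 2)]) [Var 0; Var 1]))
           [Var 0]).

Lemma sem_padded_le_1 k E m : sem (padded k E) [m] <= 1.
Proof. unfold padded. rewrite sem_and. apply Nat.b2n_le_1. Qed.

Lemma sem_padded k E u :
  sem (padded k E) [code_list u] <> 0 <->
  Forall (fun i => i < k) u /\
  exists j t, 0 < j <= length u /\ t <= length u /\ sem E [t; code_list (firstn j u)] <> 0.
Proof.
  unfold padded. rewrite sem_and, b2n_neq_0, andb_true_iff, !negb_true_iff, !Nat.eqb_neq,
    (sem_alllt _ _ _ u), sem_bex by reflexivity.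
  cbn [sem map nth]. rewrite sem_cst, (sem_len _ _ u), !b2n_neq_0, forallb_forall,
    existsb_exists, Forall_forall by reflexivity.
  setoid_rewrite Nat.ltb_lt. apply and_iff_compat_l. split.
  - intros [j [Hj Hbody]]. apply in_seq in Hj. apply negb_true_iff, Nat.eqb_neq in Hbody.
    rewrite sem_and, b2n_neq_0, andb_true_iff, !negb_true_iff, !Nat.eqb_neq, sem_lt, sem_bex
      in Hbody. cbn [sem map nth] in Hbody. rewrite (sem_len _ _ u), !b2n_neq_0 in Hbody
      by reflexivity.
    destruct Hbody as [Hj0 Ht]. apply existsb_exists in Ht as [t [Ht Hbody]].
    apply in_seq in Ht. apply negb_true_iff, Nat.eqb_neq in Hbody. cbn [sem map nth] in Hbody.
    rewrite (sem_firstn _ _ _ u) in Hbody by reflexivity. cbn [sem nth] in Hbody.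
    exists j, t. apply Nat.ltb_lt in Hj0. repeat split; auto; lia.
  - intros [j [t [Hj [Ht Hbody]]]]. exists j. split; [apply in_seq; lia|].
    apply negb_true_iff, Nat.eqb_neq.
    rewrite sem_and, b2n_neq_0, andb_true_iff, !negb_true_iff, !Nat.eqb_neq, sem_lt, sem_bex.
    cbn [sem map nth]. rewrite (sem_len _ _ u), !b2n_neq_0, Nat.ltb_lt by reflexivity.
    split; [lia|]. apply existsb_exists. exists t. split; [apply in_seq; lia|].
    apply negb_true_iff, Nat.eqb_neq. cbn [sem map nth].
    rewrite (sem_firstn _ _ _ u) by reflexivity. exact Hbody.
Qed.

Lemma factor_S {A} (x : Z -> A) i n : factor x i (S n) = x i :: factor x (i + 1)%Z n.
Proof.
  unfold factor. rewrite <- cons_seq. cbn [map]. rewrite Z.add_0_r. f_equal.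
  rewrite <- seq_shift, map_map. apply map_ext. intros j. f_equal. lia.
Qed.

Lemma factor_add {A} (x : Z -> A) i m n :
  factor x i (m + n) = factor x i m ++ factor x (i + Z.of_nat m)%Z n.
Proof.
  revert i; induction m as [|m IH]; intros i; [simpl; rewrite Z.add_0_r; reflexivity|].
  rewrite Nat.add_succ_l, !factor_S, IH. simpl. do 3 f_equal. lia.
Qed.

Lemma length_factor {A} (x : Z -> A) i n : length (factor x i n) = n.
Proof. unfold factor. rewrite length_map, length_seq. reflexivity. Qed.

Lemma firstn_factor {A} (x : Z -> A) i m n : m <= n -> firstn m (factor x i n) = factor x i m.
Proof.
  intros H. replace n with (m + (n - m)) by lia.
  rewrite factor_add, firstn_app, length_factor, Nat.sub_diag, firstn_all2
    by (rewrite length_factor; lia).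
  apply app_nil_r.
Qed.

Lemma factor_as_index_word {T} (A : T -> Prop) (k : nat) (a : nat -> T) (x : Z -> T) :
  (forall t, A t <-> exists i, i < k /\ a i = t) -> (forall j, A (x j)) ->
  forall n i, exists u, length u = n /\ Forall (fun j => j < k) u /\ map a u = factor x i n.
Proof.
  intros Henum Hx n. induction n as [|n IH]; intros i; [exists []; auto|].
  destruct (proj1 (Henum (x i)) (Hx i)) as [c [Hc Hac]].
  destruct (IH (i + 1)%Z) as [u [Hlen [Hk Hu]]].
  exists (c :: u). rewrite factor_S. simpl. repeat split; auto. congruence.
Qed.

Lemma effective_subshift_of_sigma1_forbidden {T} (A : T -> Prop) (Bad : list T -> Prop)
    (k : nat) (a : nat -> T) (E : expr) :
  (forall i j, i < k -> j < k -> a i = a j -> i = j) ->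
  (forall t, A t <-> exists i, i < k /\ a i = t) ->
  (forall u, Forall (fun i => i < k) u ->
             Bad (map a u) <-> exists t, sem E [t; code_list u] <> 0) ->
  effective_subshift A (fun x => (forall i, A (x i)) /\ forall i n, 0 < n -> ~ Bad (factor x i n)).
Proof.
  intros Hinj Henum HE. exists k, a. split; [exact Hinj|]. split; [exact Henum|].
  exists (fun w => sem (padded k E) [code_list w] <> 0). split; [|split].
  - intros w Hw. apply sem_padded in Hw. tauto.
  - apply (decidable_set_of_expr (padded k E)); [apply sem_padded_le_1|reflexivity].
  - intros x. split.
    + intros [HA Hgood]. split; [exact HA|]. intros i w Hw Hfac.
      apply sem_padded in Hw as [Hk [j [t [Hj [Ht HEt]]]]].
      apply (Hgood i j); [lia|].
      rewrite <- (firstn_factor x i j (length w)), Hfac, firstn_map by lia.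
      apply HE; [|eauto]. rewrite <- (firstn_skipn j w) in Hk. apply Forall_app in Hk. tauto.
    + intros [HA Havoid]. split; [exact HA|]. intros i n Hn Hbad.
      destruct (factor_as_index_word A k a x Henum HA n i) as [u [Hlu [Hku Hu]]].
      rewrite <- Hu in Hbad. apply HE in Hbad as [t Ht]; [|exact Hku].
      destruct (factor_as_index_word A k a x Henum HA t (i + Z.of_nat n)%Z)
        as [w [Hlw [Hkw Hw]]].
      apply (Havoid i (u ++ w)).
      * apply sem_padded. split; [apply Forall_app; auto|].
        exists n, t. rewrite length_app, firstn_app, Hlu, Nat.sub_diag, firstn_all2 by lia.
        rewrite firstn_O, app_nil_r. repeat split; auto; lia.
      * rewrite length_app, Hlu, Hlw, factor_add, map_app, Hu, Hw. reflexivity.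
Qed.

(** * Recursively presented groups *)

Lemma nodup_exists {T} (l : list T) : exists l', NoDup l' /\ forall x, In x l <-> In x l'.
Proof.
  induction l as [|y l [l' [Hn Hl]]]; [exists []; split; [constructor|tauto]|].
  destruct (classic (In y l')).
  - exists l'. split; auto. intros x. simpl. rewrite Hl. split; [intros [<-|]|]; auto.
  - exists (y :: l'). split; [constructor; auto|]. intros x. simpl. rewrite Hl. tauto.
Qed.

Lemma finite_enumeration {T} (d : T) (l : list T) : exists (k : nat) (a : nat -> T),
  (forall i j, i < k -> j < k -> a i = a j -> i = j) /\
  (forall t, In t l <-> exists i, i < k /\ a i = t).
Proof.
  destruct (nodup_exists l) as [l' [Hn Hl]]. exists (length l'), (fun i => nth i l' d). split.
  - intros i j Hi Hj E. eapply NoDup_nth; eauto.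
  - intros t. rewrite Hl. split.
    + intros Ht. apply In_nth with (d := d) in Ht as [i [Hi Hi']]. eauto.
    + intros [i [Hi <-]]. apply nth_In. exact Hi.
Qed.

Lemma alph_In (G : group) S t : alph G S t <-> In t (flat_map (fun h => [h; ginv G h]) S).
Proof.
  unfold alph. rewrite in_flat_map. simpl.
  split; intros [h [Hh Ht]]; exists h; intuition congruence.
Qed.

Lemma prodG_app (G : group) (l1 l2 : list G) :
  prodG G (l1 ++ l2) = gmul G (prodG G l1) (prodG G l2).
Proof.
  induction l1 as [|g l1 IH]; simpl; [rewrite gmul1l; reflexivity|].
  unfold prodG in *. simpl. rewrite IH. apply gassoc.
Qed.

Lemma eval_word_app G gen w1 w2 :
  eval_word G gen (w1 ++ w2) = gmul G (eval_word G gen w1) (eval_word G gen w2).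
Proof. unfold eval_word. rewrite map_app. apply prodG_app. Qed.

Definition substitute (ws : list (list letter)) (u : list nat) : list letter :=
  concat (map (fun i => nth i ws []) u).

Lemma eval_substitute (G : group) n gen (a : nat -> G) k ws :
  (forall i, i < k -> word_over n (nth i ws []) /\ eval_word G gen (nth i ws []) = a i) ->
  forall u, Forall (fun j => j < k) u ->
  word_over n (substitute ws u) /\ eval_word G gen (substitute ws u) = prodG G (map a u).
Proof.
  intros Hws u Hu. induction Hu as [|i u Hi _ [IH1 IH2]]; [split; [constructor|reflexivity]|].
  unfold substitute in *. cbn [map concat]. destruct (Hws i Hi) as [H1 H2]. split.
  - apply Forall_app. auto.
  - rewrite eval_word_app, H2, IH2. reflexivity.
Qed.

Definition Substitute (tab : list nat) e := FoldL 0 (App (Var 0) (Tab tab (Var 1))) Zero e [].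

Lemma sem_substitute ws e env u : sem e env = code_list u ->
  sem (Substitute (map (fun w => code_list (map letter_code w)) ws) e) env =
  code_list (map letter_code (substitute ws u)).
Proof.
  intros H. unfold Substitute. rewrite (sem_foldl _ _ _ _ _ _ u) by auto. cbn [sem map].
  set (tab := map (fun w => code_list (map letter_code w)) ws).
  assert (Hacc : forall P, fold_left (fun acc x => sem (App (Var 0) (Tab tab (Var 1))) [acc; x]) u
      (code_list (map letter_code (substitute ws P))) =
      code_list (map letter_code (substitute ws (P ++ u)))).
  { clear H. induction u as [|i u IH]; intros P; [rewrite app_nil_r; reflexivity|]. simpl.
    rewrite (sem_app _ _ _ (map letter_code (substitute ws P)) (map letter_code (nth i ws [])));
      [|reflexivity|].
    - replace (P ++ i :: u) with ((P ++ [i]) ++ u) by (rewrite <- app_assoc; reflexivity).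
      rewrite <- IH. unfold substitute. rewrite map_app, concat_app, map_app. simpl.
      rewrite app_nil_r. reflexivity.
    - rewrite sem_tab. cbn [sem nth]. subst tab.
      rewrite <- (map_nth (fun w => code_list (map letter_code w)) ws [] i). reflexivity. }
  exact (Hacc []).
Qed.

Lemma generator_words (G : group) n gen (a : nat -> G) k :
  (forall g : G, exists w, word_over n w /\ eval_word G gen w = g) ->
  exists ws : list (list letter),
    forall i, i < k -> word_over n (nth i ws []) /\ eval_word G gen (nth i ws []) = a i.
Proof.
  intros Hsurj.
  assert (Hlen : exists ws : list (list letter), length ws = k /\
    forall i, i < k -> word_over n (nth i ws []) /\ eval_word G gen (nth i ws []) = a i).
  { induction k as [|k [ws [Hlen Hws]]]; [exists []; split; [reflexivity|intros; lia]|].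
    destruct (Hsurj (a k)) as [w Hw]. exists (ws ++ [w]).
    rewrite length_app, Hlen, Nat.add_1_r. split; [reflexivity|]. intros i Hi.
    destruct (Nat.eq_dec i k) as [Hik|Hik].
    - rewrite app_nth2, Hlen, Hik, Nat.sub_diag by lia. exact Hw.
    - rewrite app_nth1 by lia. apply Hws. lia. }
  destruct Hlen as [ws [_ Hws]]. eauto.
Qed.

Lemma index_word_problem_sigma1 (G : group) (k : nat) (a : nat -> G) :
  recursively_presented G ->
  exists E, forall u, Forall (fun i => i < k) u ->
    (prodG G (map a u) = gone G <-> exists t, sem E [t; code_list u] <> 0).
Proof.
  intros [n [gen [R [_ [HR [Hsurj Hker]]]]]].
  destruct (trivial_in_pres_sigma1 n R HR) as [E HE].
  destruct (generator_words G n gen a k Hsurj) as [ws Hws].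
  set (tab := map (fun w => code_list (map letter_code w)) ws).
  exists (Call E [Var 0; Substitute tab (Var 1)]). intros u Hu.
  destruct (eval_substitute G n gen a k ws Hws u Hu) as [Hover Heval].
  assert (Hsem : forall t, sem (Call E [Var 0; Substitute tab (Var 1)]) [t; code_list u] =
                           sem E [t; code_list (map letter_code (substitute ws u))])
    by (intros t; cbn [sem map nth]; rewrite (sem_substitute ws _ _ u) by reflexivity; reflexivity).
  setoid_rewrite Hsem. rewrite <- Heval, Hker, HE by exact Hover. reflexivity.
Qed.

Theorem proposition4 (G : group) :
  recursively_presented G ->
  forall S : list G, generates G S -> effective_subshift (alph G S) (skeleton G S).
Proof.
  intros HG S _.
  destruct (finite_enumeration (gone G) (flat_map (fun h => [h; ginv G h]) S))
    as [k [a [Hinj Henum]]].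
  setoid_rewrite <- alph_In in Henum.
  destruct (index_word_problem_sigma1 G k a HG) as [E HE].
  exact (effective_subshift_of_sigma1_forbidden (alph G S) (fun l => prodG G l = gone G)
           k a E Hinj Henum HE).
Qed.
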